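(* There is a constant $c>0$ such that for all $n\in\mathbb{N}$ and all integers $k\ge 2$, the randomized query complexity of $TARSKI(n,k)$ is at least $c\cdot\frac{k\log n}{\log k}$.
   Context: For $k,n\in\mathbb{N}$ let $\mathcal{L}_n^k=\{0,1,\ldots,n-1\}^k$ with the componentwise order. $TARSKI(n,k)$: given oracle access to an unknown monotone $f:\mathcal{L}_n^k\to\mathcal{L}_n^k$ (a query of $v$ returns $f(v)$), find $x$ with $f(x)=x$. The randomized query complexity is the minimum, over randomized algorithms that on every input output a fixed point with probability at least $9/10$, of the worst-case expected number of queries (expectation over the algorithm's coins). *)

From HB Require Import structures.
From mathcomp Require Import all_boot all_order all_algebra.
From mathcomp Require Import all_classical all_reals all_analysis.
Set Implicit Arguments. Unset Strict Implicit. Unset Printing Implicit Defensive.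
Import Order.TTheory GRing.Theory Num.Theory.
Local Open Scope ring_scope.

Definition grid (n k : nat) : finType := {ffun 'I_k -> 'I_n}.

Definition grid_le (n k : nat) (x y : grid n k) : Prop :=
  forall i : 'I_k, (x i <= y i)%N.

Definition monotone_map (n k : nat) (f : grid n k -> grid n k) : Prop :=
  forall x y, grid_le x y -> grid_le (f x) (f y).

(* Deterministic (adaptive) query algorithms = finite decision trees:
   either output a point, or query a point v and continue according to
   the oracle's answer f v. *)
Inductive dtree (V : Type) : Type :=
  | Out : V -> dtree V
  | Query : V -> (V -> dtree V) -> dtree V.

Fixpoint run (V : Type) (t : dtree V) (f : V -> V) : V * nat :=
  match t with
  | Out x => (x, 0%N)
  | Query v g => let r := run (g (f v)) f in (r.1, r.2.+1)
  end.

(* A randomized query algorithm = a discrete (countably supported)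
   probability distribution over deterministic decision trees:
   tree i is chosen with probability weight i. *)
Record rand_alg (R : realType) (V : Type) := RandAlg {
  ra_tree : nat -> dtree V;
  ra_weight : nat -> R;
  ra_weight_ge0 : forall i, 0 <= ra_weight i;
  ra_weight_sum1 : (\sum_(i <oo) (ra_weight i)%:E = 1)%E
}.

Definition success_prob (R : realType) (V : eqType) (A : rand_alg R V)
    (f : V -> V) : \bar R :=
  (\sum_(i <oo) (ra_weight A i *
       (f (run (ra_tree A i) f).1 == (run (ra_tree A i) f).1)%:R)%:E)%E.

Definition expected_queries (R : realType) (V : Type) (A : rand_alg R V)
    (f : V -> V) : \bar R :=
  (\sum_(i <oo) (ra_weight A i * (run (ra_tree A i) f).2%:R)%:E)%E.

Definition solves_tarski (R : realType) (n k : nat)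
    (A : rand_alg R (grid n k)) : Prop :=
  forall f : grid n k -> grid n k, monotone_map f ->
    ((9 / 10 : R)%:E <= success_prob A f)%E.

From mathcomp Require Import all_boot all_order all_algebra.
From mathcomp Require Import all_classical all_reals all_analysis.
From mathcomp Require Import zify lra.
Import Order.TTheory GRing.Theory Num.Theory.

Set Implicit Arguments.
Unset Strict Implicit.
Unset Printing Implicit Defensive.

(* Yao's principle on a family of planted instances.  For every point z of the
   grid there is a monotone map f_z whose only fixed point is z and whose value
   at v is determined by v together with the first coordinate where v and z
   differ and the sign of that difference: 2k+1 possible answers.  A decision
   tree making at most m queries therefore solves at most (2k+1)^m of the n^k
   maps f_z, so by Markov's inequality any algorithm that succeeds with
   probability 9/10 on every f_z makes, on average over z, at least 2(m+1)/5
   queries whenever 2(2k+1)^m <= n^k; the largest such m is of order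
   k log n / log k. *)

Section PlantedFixedPoint.
Variables n k : nat.
Local Notation grid := (grid n k).

Definition ord_up (x : 'I_n) : 'I_n := insubd x x.+1.
Definition ord_down (x : 'I_n) : 'I_n := insubd x x.-1.

Lemma val_ord_up x : val (ord_up x) = if x.+1 < n then x.+1 else x.
Proof. by rewrite /ord_up val_insubd. Qed.

Lemma val_ord_down x : val (ord_down x) = x.-1.
Proof. by rewrite /ord_down val_insubd (leq_ltn_trans (leq_pred x) (ltn_ord x)). Qed.

Lemma ord_up_mono (x y : 'I_n) : x <= y -> ord_up x <= ord_up y.
Proof. by rewrite !val_ord_up; have := ltn_ord y; case: ifP; case: ifP; lia. Qed.

Lemma ord_down_mono (x y : 'I_n) : x <= y -> ord_down x <= ord_down y.
Proof. by rewrite !val_ord_down; lia. Qed.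

Definition step_toward (a x : 'I_n) : 'I_n :=
  if x < a then ord_up x else if a < x then ord_down x else x.

Lemma step_toward_id a : step_toward a a = a.
Proof. by rewrite /step_toward ltnn. Qed.

Lemma step_toward_fixed a x : step_toward a x = x -> x = a.
Proof.
rewrite /step_toward; have := ltn_ord a.
case: (ltngtP x a) => [lt_xa | lt_ax | eq_xa] lt_an; last by move=> _; apply: ord_inj.
  by move/(congr1 (@nat_of_ord n)); rewrite val_ord_up; case: ifP; lia.
by move/(congr1 (@nat_of_ord n)); rewrite val_ord_down; lia.
Qed.

Lemma step_toward_mono a (x y : 'I_n) : x <= y -> step_toward a x <= step_toward a y.
Proof.
rewrite /step_toward; have := ltn_ord a; have := ltn_ord y.
case: (ltngtP x a); case: (ltngtP y a); rewrite ?val_ord_up ?val_ord_down;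
  by repeat case: ifP; lia.
Qed.

Lemma step_toward_between a (x : 'I_n) :
  ord_down x <= step_toward a x <= ord_up x.
Proof.
rewrite /step_toward; have := ltn_ord a.
by case: (ltngtP x a); rewrite ?val_ord_up ?val_ord_down; repeat case: ifP; lia.
Qed.

Lemma first_diff (z v : grid) : v != z ->
  exists2 j : 'I_k, v j != z j & forall l : 'I_k, l < j -> v l = z l.
Proof.
move=> neq_vz; have [j0 neq_j0] : exists j, v j != z j.
  apply/existsP; apply: contraNT neq_vz => /existsPn eq_vz.
  by apply/eqP/ffunP => j; apply/eqP/negPn.
case: (@arg_minnP _ j0 (fun j => v j != z j) (@nat_of_ord k) neq_j0).
move=> j neq_j min_j; exists j => // l lt_lj.
by apply/eqP; apply: contraTT lt_lj => /min_j; rewrite -leqNgt.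
Qed.

Definition above (z v : grid) (i : 'I_k) : bool :=
  [exists j : 'I_k, [&& j < i, z j < v j & [forall l : 'I_k, (l < j) ==> (z l <= v l)]]].

Lemma above_homo (z z' v v' : grid) i :
  grid_le z' z -> grid_le v v' -> above z v i -> above z' v' i.
Proof.
move=> le_z le_v /existsP[j /and3P[lt_ji lt_zv /forallP le_pre]].
apply/existsP; exists j.
rewrite lt_ji (leq_ltn_trans (le_z j) (leq_trans lt_zv (le_v j))) /=.
apply/forallP => l; apply/implyP => lt_lj.
exact: leq_trans (le_z l) (leq_trans (implyP (le_pre l) lt_lj) (le_v l)).
Qed.

Lemma above_refl (z : grid) i : above z z i = false.
Proof. by apply/existsP => -[j /and3P[_]]; rewrite ltnn. Qed.

Lemma above_first_diff (z v : grid) (j : 'I_k) :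
  v j != z j -> (forall l : 'I_k, l < j -> v l = z l) ->
  forall i, above z v i = (j < i) && (z j < v j).
Proof.
move=> neq_j eq_pre i; apply/existsP/andP => [|[lt_ji lt_zv]].
  case=> j' /and3P[lt_j'i lt_zv /forallP le_pre].
  case: (ltngtP j' j) => [lt_j'j | lt_jj' | /ord_inj eq_j'j].
  - by rewrite eq_pre // ltnn in lt_zv.
  - have le_zv := implyP (le_pre j) lt_jj'.
    by split; [exact: ltn_trans lt_j'i | rewrite ltn_neqAle eq_sym neq_j].
  - by rewrite -eq_j'j.
exists j; rewrite lt_ji lt_zv; apply/forallP => l; apply/implyP => lt_lj.
by rewrite eq_pre.
Qed.

(* Before the first coordinate j where v and z differ, v is left unchanged;
   coordinate j steps toward z j, and every later coordinate moves up if
   v j > z j and down if v j < z j.  Reading this sign through [above] rather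
   than through j itself is what makes the map monotone (see [plantedE]). *)
Definition planted (z v : grid) : grid :=
  [ffun i => if above z v i then ord_up (v i)
             else if above v z i then ord_down (v i)
             else step_toward (z i) (v i)].

Lemma planted_mono z : monotone_map (planted z).
Proof.
move=> v w le_vw i; rewrite !ffunE; have le_i := le_vw i.
have /andP[down_v up_v] := step_toward_between (z i) (v i).
have /andP[down_w _] := step_toward_between (z i) (w i).
case: (boolP (above z w i)) => [_ | not_above_w].
  apply: leq_trans (ord_up_mono le_i).
  by case: ifP => // _; case: ifP => // _; exact: leq_trans down_v up_v.
have -> : above z v i = false.
  by apply: contraNF not_above_w; apply: above_homo.
case: (boolP (above w z i)) => [above_w | _].
  by rewrite (above_homo le_vw (fun=> leqnn _) above_w); exact: ord_down_mono.
case: ifP => _; last exact: step_toward_mono.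
exact: leq_trans (ord_down_mono le_i) down_w.
Qed.

Lemma planted_fixed z v : planted z v = v -> v = z.
Proof.
move=> fix_v; apply/eqP; apply: contraT => /first_diff[j neq_j eq_pre].
have := congr1 (fun f : grid => f j) fix_v; rewrite ffunE.
rewrite (above_first_diff neq_j eq_pre) ltnn.
have eq_pre' (l : 'I_k) : l < j -> z l = v l by move=> /eq_pre ->.
rewrite (above_first_diff _ eq_pre') ?ltnn 1?eq_sym //.
by move/step_toward_fixed/eqP; rewrite (negbTE neq_j).
Qed.

Definition diff_class (z v : grid) : option ('I_k * bool) :=
  if [pick j | (v j != z j) && [forall l : 'I_k, (l < j) ==> (v l == z l)]] is Some j
  then Some (j, v j < z j) else None.

Definition planted_of_class (v : grid) (c : option ('I_k * bool)) : grid :=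
  if c is Some (j, below) then
    [ffun i : 'I_k => if i < j then v i
                      else if i == j then (if below then ord_up (v i) else ord_down (v i))
                      else (if below then ord_down (v i) else ord_up (v i))]
  else v.

Lemma plantedE z v : planted z v = planted_of_class v (diff_class z v).
Proof.
rewrite /diff_class; case: pickP => [j /andP[neq_j /forallP eq_pre0] | no_diff]; last first.
  suff -> : v = z by apply/ffunP => i; rewrite ffunE above_refl step_toward_id.
  apply/eqP; apply: contraT => /first_diff[j neq_j eq_pre].
  have /negbT/negP := no_diff j; rewrite neq_j; case; apply/forallP => l.
  by apply/implyP => /eq_pre ->.
have eq_pre (l : 'I_k) : l < j -> v l = z l by move=> /(implyP (eq_pre0 l))/eqP.
have eq_pre' (l : 'I_k) : l < j -> z l = v l by move=> /eq_pre ->.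
apply/ffunP => i; rewrite !ffunE (above_first_diff neq_j eq_pre).
rewrite (above_first_diff _ eq_pre') 1?eq_sym //.
have [{i}-> | neq_ij] := eqVneq i j.
  rewrite ltnn /step_toward.
  by case: (ltngtP (v j) (z j)) => // /ord_inj eq_j; rewrite eq_j eqxx in neq_j.
case: (ltngtP i j) => [lt_ij | lt_ji | eq_ij] /=.
- by rewrite eq_pre // step_toward_id.
- by case: (ltngtP (v j) (z j)) => // /ord_inj eq_j; rewrite eq_j eqxx in neq_j.
- by rewrite (ord_inj eq_ij) eqxx in neq_ij.
Qed.

End PlantedFixedPoint.

Definition succeeds (V : eqType) (t : dtree V) (f : V -> V) : bool :=
  f (run t f).1 == (run t f).1.

Definition queries (V : Type) (t : dtree V) (f : V -> V) : nat := (run t f).2.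

Section DecisionTreeCounting.
Variables (V : eqType) (Z C : finType) (oracle : Z -> V -> V).
Variables (answer : Z -> V -> C) (decode : V -> C -> V).
Hypothesis oracleE : forall z v, oracle z v = decode v (answer z v).
Hypothesis fixed_point_inj :
  forall z z' x, oracle z x = x -> oracle z' x = x -> z = z'.

Lemma count_solved_le (t : dtree V) m (P : pred Z) :
  \sum_(z | P z) ((queries t (oracle z) <= m) && succeeds t (oracle z)) <= #|C| ^ m.
Proof.
elim: t m P => [x | v g IHg] m P.
  rewrite /queries /succeeds /=.
  case: (pickP [pred z | P z && (oracle z x == x)]); last first.
    move=> no_fix.
    by rewrite big1 // => z P_z; have := no_fix z; rewrite /= P_z /= => ->.
  move=> z0 /andP[P_z0 /eqP fix_z0].
  have C_gt0 : 0 < #|C| by apply/card_gt0P; exists (answer z0 x).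
  rewrite (bigD1 z0) //= big1 => [|z /andP[_ neq_z]].
    by rewrite addn0; apply: leq_trans (leq_b1 _) _; rewrite expn_gt0 C_gt0.
  apply/eqP; rewrite eqb0; apply: contra neq_z => /eqP fix_z.
  by apply/eqP; exact: fixed_point_inj fix_z fix_z0.
case: m => [|m]; first by rewrite big1.
rewrite (partition_big (fun z => answer z v) predT) //=.
apply: leq_trans (_ : \sum_(c : C) #|C| ^ m <= _); last by rewrite sum_nat_const expnS.
apply: leq_sum => c _.
rewrite (eq_bigr (fun z => nat_of_bool ((queries (g (decode v c)) (oracle z) <= m) &&
                           succeeds (g (decode v c)) (oracle z)))) ?IHg //.
by move=> z /andP[_ /eqP <-]; rewrite /queries /succeeds /= -oracleE ltnS.
Qed.

End DecisionTreeCounting.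

Lemma sum_weighted_nneseries (R : realType) (I : finType) (w : nat -> R)
    (F : nat -> I -> nat) : (forall i, 0 <= w i)%R ->
  (\sum_(x : I) \sum_(i <oo) (w i * (F i x)%:R)%:E =
   \sum_(i <oo) (w i * (\sum_(x : I) F i x)%:R)%:E)%E.
Proof.
move=> w_ge0; rewrite -nneseries_sum => [|x i _]; last by rewrite lee_fin mulr_ge0.
by apply: eq_eseriesr => i _; rewrite sumEFin natr_sum mulr_sumr.
Qed.

Lemma exists_ge_mean (R : realDomainType) (I : finType) (X : I -> \bar R) (T : R) :
  0 < #|I| -> ((#|I|%:R * T)%:E <= \sum_(i : I) X i)%E -> exists i, (T%:E <= X i)%E.
Proof.
case/card_gt0P => i0 _ mean_le.
have [i _ max_i] := @arg_maxP _ _ I i0 xpredT X isT.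
exists i; rewrite -(@lee_pmul2l _ #|I|%:R%:E) ?fin_numE ?lte_fin ?ltr0n //; last first.
  by apply/card_gt0P; exists i0.
rewrite -EFinM (le_trans mean_le) //.
apply: le_trans (lee_sum _ (fun j _ => max_i j isT)) _.
by rewrite sumr_const mule_natl.
Qed.

Section YaoBound.
Variables (R : realType) (V : eqType) (Z : finType) (oracle : Z -> V -> V) (m M : nat).
Hypothesis few_solved : forall t : dtree V,
  \sum_z ((queries t (oracle z) <= m) && succeeds t (oracle z)) <= M.

Lemma solved_markov_le t :
  m.+1 * \sum_z succeeds t (oracle z) <= m.+1 * M + \sum_z queries t (oracle z).
Proof.
have split_solved : \sum_z succeeds t (oracle z) <=
    \sum_z ((queries t (oracle z) <= m) && succeeds t (oracle z)) +
    \sum_z (m < queries t (oracle z)).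
  by rewrite -big_split /=; apply: leq_sum => z _; case: succeeds; case: leqP.
apply: leq_trans (leq_mul (leqnn m.+1) split_solved) _.
rewrite mulnDr leq_add ?leq_mul2l ?few_solved ?orbT // big_distrr /=.
by apply: leq_sum => z _; case: ltnP; rewrite ?muln1 ?muln0.
Qed.

Local Open Scope ring_scope.

Lemma sum_expected_queries_ge (A : rand_alg R V) (p : R) :
  (forall z, p%:E <= success_prob A (oracle z))%E ->
  ((m.+1%:R * (p * #|Z|%:R - M%:R))%:E <= \sum_z expected_queries A (oracle z))%E.
Proof.
move=> succ_p; set w := ra_weight A; have w_ge0 i : 0 <= w i := ra_weight_ge0 A i.
set S := fun i => (\sum_z succeeds (ra_tree A i) (oracle z))%:R : R.
set Q := fun i => (\sum_z queries (ra_tree A i) (oracle z))%:R : R.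
have sum_succ : ((p * #|Z|%:R)%:E <= \sum_(i <oo) (w i * S i)%:E)%E.
  rewrite -sum_weighted_nneseries // mulr_natr -sumr_const -sumEFin.
  by apply: lee_sum => z _; exact: succ_p.
have -> : (\sum_z expected_queries A (oracle z) = \sum_(i <oo) (w i * Q i)%:E)%E.
  exact: sum_weighted_nneseries.
pose bound : R := m.+1%:R * M%:R.
have per_tree i : m.+1%:R * (w i * S i) <= w i * bound + w i * Q i.
  have := solved_markov_le (ra_tree A i); rewrite -(ler_nat R) natrD !natrM.
  by move/(ler_wpM2l (w_ge0 i)); rewrite /S /Q /bound; lra.
have sum_bound : (\sum_(i <oo) (w i * bound)%:E = bound%:E)%E.
  under eq_eseriesr do rewrite EFinM muleC.
  rewrite nneseriesZl => [|i _]; last by rewrite lee_fin.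
  exact: eq_trans (congr1 (fun s => bound%:E * s)%E (ra_weight_sum1 A)) (mule1 _).
rewrite mulrBr -/bound EFinB leeBlDl // EFinM.
apply: le_trans (lee_wpmul2l _ sum_succ) _; first by rewrite lee_fin.
rewrite -nneseriesZl => [|i _]; last by rewrite lee_fin mulr_ge0.
apply: (@le_trans _ _ (\sum_(i <oo) ((w i * bound)%:E + (w i * Q i)%:E))%E).
  apply: lee_nneseries => [i _ _ | i _]; first by rewrite lee_fin !mulr_ge0.
  by rewrite -EFinM -EFinD lee_fin per_tree.
rewrite nneseriesD => [|i _ _|i _ _]; last 2 first.
- by rewrite lee_fin mulr_ge0 ?w_ge0 ?mulr_ge0.
- by rewrite lee_fin mulr_ge0 ?w_ge0.
by rewrite sum_bound.
Qed.

End YaoBound.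

Lemma query_budget_bounds n k : 2 <= n -> 2 <= k ->
  exists m, 2 * (k * 2).+1 ^ m <= n ^ k <= k ^ (4 * m.+1).
Proof.
move=> n_ge2 k_ge2; set b := (k * 2).+1.
have b_gt1 : 1 < b by rewrite /b; lia.
have half_gt0 : 0 < n ^ k %/ 2.
  by rewrite divn_gt0 // (leq_trans n_ge2) // -{1}(expn1 n) leq_pexp2l; lia.
have /andP[lo hi] := trunc_log_bounds b_gt1 half_gt0.
set m := trunc_log b (n ^ k %/ 2) in lo hi *; exists m; apply/andP; split.
  by move: lo; set p := b ^ m; lia.
have le_b : b <= k ^ 3 by rewrite /b !expnS expn0; nia.
have le_2k : 2 * (k ^ 3) ^ m.+1 <= k ^ (4 * m.+1).
  rewrite -expnM; apply: leq_trans (_ : k * k ^ (3 * m.+1) <= _).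
    by rewrite leq_mul2r k_ge2 orbT.
  by rewrite -expnS leq_pexp2l; lia.
apply: leq_trans le_2k; apply: leq_trans (_ : 2 * b ^ m.+1 <= _).
  by move: hi; set p := b ^ m.+1; lia.
by rewrite leq_mul2l leq_exp2r.
Qed.

Local Open Scope ring_scope.

Lemma ln_ratio_le (R : realType) (n k m : nat) : (0 < n)%N -> (1 < k)%N ->
  (n ^ k <= k ^ m)%N -> k%:R * ln (n%:R : R) / ln k%:R <= m%:R.
Proof.
move=> n_gt0 k_gt1 le_nk; have k_gt0 := ltnW k_gt1.
rewrite ler_pdivrMr ?ln_gt0 ?ltr1n // !mulr_natl -!lnXn ?ltr0n //.
by rewrite ler_ln ?posrE -?natrX ?ltr0n ?expn_gt0 ?n_gt0 ?k_gt0 ?ler_nat.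
Qed.

Lemma exists_hard_planted (R : realType) n k m (A : rand_alg R (grid n k)) :
  solves_tarski A -> (2 * (k * 2).+1 ^ m <= n ^ k)%N ->
  exists z, ((2 / 5 * m.+1%:R)%:E <= expected_queries A (planted z))%E.
Proof.
move=> solves_A budget_lo.
have card_class : #|{: option ('I_k * bool)}| = (k * 2).+1.
  by rewrite card_option card_prod card_ord card_bool.
have card_grid : #|{: grid n k}| = (n ^ k)%N by rewrite card_ffun !card_ord.
have planted_inj (z z' x : grid n k) : planted z x = x -> planted z' x = x -> z = z'.
  by move=> /planted_fixed <- /planted_fixed.
have few_solved t := count_solved_le (@plantedE n k) planted_inj t m predT.
have := sum_expected_queries_ge few_solved (fun z => solves_A _ (planted_mono z)).
rewrite card_class card_grid => sum_ge.
apply: exists_ge_mean; first by rewrite card_grid; lia.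
apply: le_trans sum_ge; rewrite lee_fin card_grid.
have := ler_wpM2l (ler0n R m.+1) (_ : 2 * ((k * 2).+1 ^ m)%:R <= (n ^ k)%:R :> R).
by rewrite -natrM ler_nat => /(_ budget_lo); lra.
Qed.

Theorem proposition9 (R : realType) :
  exists c : R, (0 < c)%R /\
    forall (n k : nat), (2 <= k)%N ->
    forall A : rand_alg R (grid n k), solves_tarski A ->
    exists f : grid n k -> grid n k, monotone_map f /\
      (((c * k%:R * ln (n%:R : R) / ln (k%:R : R))%R)%:E
         <= expected_queries A f)%E.
Proof.
exists (1 / 10); split=> // n k k_ge2 A solves_A.
have lnk_gt0 : 0 < ln (k%:R : R) by rewrite ln_gt0 // ltr1n.
have [n_le1 | n_ge2] := leqP n 1.
  exists id; split=> //; apply: le_trans (nneseries_ge0 _) => [|i _ _].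
    rewrite lee_fin ler_pdivrMr // mul0r mulr_ge0_le0 ?mulr_ge0 //.
    by rewrite ln_le0 // lern1.
  by rewrite lee_fin mulr_ge0 ?ra_weight_ge0.
have [m /andP[budget_lo budget_hi]] := query_budget_bounds n_ge2 k_ge2.
have [z hard_z] := exists_hard_planted solves_A budget_lo.
exists (planted z); split; first exact: planted_mono.
apply: le_trans hard_z; rewrite lee_fin.
have := ln_ratio_le R (ltnW n_ge2) k_ge2 budget_hi.
by rewrite natrM; lra.
Qed.
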